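(* For every approval-based participatory budgeting instance $I=(N,\mathcal{T},B,\mathrm{cost},\mathcal{A})$ and every nonempty $T\subseteq\mathcal{T}$, the proportionality degree of the sequential Phragmén rule satisfies \[ d_{\mathrm{Phrag}}(T)\;\ge\;\frac{1}{2}\left(\frac{\mathrm{cost}(T)}{\max_{t\in T}\mathrm{cost}(t)}-1\right). \]
   Context: An approval-based PB instance is $I=(N,\mathcal{T},B,\mathrm{cost},\mathcal{A})$: $N$ is a set of $n$ voters, $\mathcal{T}$ a finite set of projects, $B>0$ a budget, $\mathrm{cost}:\mathcal{T}\to\mathbb{R}_{>0}$, with $\mathrm{cost}(S)=\sum_{t\in S}\mathrm{cost}(t)$, and $A_i\subseteq\mathcal{T}$ the projects approved by voter $i$. For $T\subseteq\mathcal{T}$, $V\subseteq N$ is $T$-cohesive if $T\subseteq\bigcap_{i\in V}A_i$ and $\mathrm{cost}(T)/B\le|V|/n$; $\mathcal{V}(T)$ is the set of all $T$-cohesive groups. $\mathrm{avg}_W(V)=\frac{1}{|V|}\sum_{i\in V}|W\cap A_i|$. For a rule $f$, $d_f(T)=\sup\{g:\ \min_{V\in\mathcal{V}(T)}\mathrm{avg}_{f(I)}(V)\ge\min(|T|,g)\}$. Sequential Phragmén rule: start with an empty proposal $W$. Every voter earns credits continuously at rate one unit of credit per unit of time. At the first moment when some not-yet-selected project $p$ is such that the voters approving $p$ together hold $\mathrm{cost}(p)$ credits, $p$ is added to $W$ and the balances of all voters approving $p$ are reset to $0$ (other voters keep their credits); ties broken arbitrarily. The rule stops when the project it would select next would make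 the total cost of $W$ exceed $B$, and returns $W$. *)

From HB Require Import structures.
From mathcomp Require Import all_boot all_order all_algebra.
Set Implicit Arguments. Unset Strict Implicit. Unset Printing Implicit Defensive.
Import Order.TTheory GRing.Theory Num.Theory.
Local Open Scope ring_scope.

Section PB.
Variables (R : realFieldType) (Voter Proj : finType).
Variables (B : R) (cost : Proj -> R) (A : Voter -> {set Proj}).

Definition costS (S : {set Proj}) : R := \sum_(t in S) cost t.

Definition support_credit (b : Voter -> R) (p : Proj) : R :=
  \sum_(i | p \in A i) b i.

(* One step of sequential Phragmen from state (W, b): after time t >= 0
   (every voter has earned t more credits), t is the FIRST moment at which
   the supporters of the unselected project p hold cost(p) credits. *)
Definition phrag_step (W : {set Proj}) (b : Voter -> R) (p : Proj) (t : R) : Prop :=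
  [/\ p \notin W, 0 <= t,
      support_credit (fun i => b i + t) p = cost p &
      forall (t' : R) (q : Proj), 0 <= t' -> t' < t -> q \notin W ->
        support_credit (fun i => b i + t') q < cost q].

Definition phrag_update (b : Voter -> R) (p : Proj) (t : R) : Voter -> R :=
  fun i => if p \in A i then 0 else b i + t.

(* States reachable by the rule (with arbitrary tie-breaking); a step is
   performed only if the selected project keeps the total cost within B. *)
Inductive phrag_reach : {set Proj} -> (Voter -> R) -> Prop :=
| phrag_init : phrag_reach set0 (fun _ => 0)
| phrag_next W b p t :
    phrag_reach W b -> phrag_step W b p t -> costS (p |: W) <= B ->
    phrag_reach (p |: W) (phrag_update b p t).

Definition phragmen_outcome (W : {set Proj}) : Prop :=
  exists b, phrag_reach W b /\
    ((exists p t, phrag_step W b p t /\ B < costS (p |: W)) \/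
     (forall p t, ~ phrag_step W b p t)).

Definition cohesive (T : {set Proj}) (V : {set Voter}) : Prop :=
  (forall i, i \in V -> T \subset A i) /\
  costS T / B <= #|V|%:R / #|Voter|%:R.

Definition avg (W : {set Proj}) (V : {set Voter}) : R :=
  (#|V|%:R)^-1 * \sum_(i in V) #|W :&: A i|%:R.

Definition pd_cond (W T : {set Proj}) (g : R) : Prop :=
  forall V : {set Voter}, cohesive T V -> Num.min (#|T|%:R) g <= avg W V.

(* d(T) >= x, where d(T) = sup { g | pd_cond W T g } (sup in the extended
   reals): every g < x is exceeded by some element of the set. *)
Definition prop_degree_ge (W T : {set Proj}) (x : R) : Prop :=
  forall g : R, g < x -> exists g' : R, g < g' /\ pd_cond W T g'.

(* max_{t in T} cost(t) (costs are positive, so 0 is a neutral start) *)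
Definition max_cost (T : {set Proj}) : R := \big[Num.max/0]_(t in T) cost t.

End PB.

From HB Require Import structures.
From mathcomp Require Import all_boot all_order all_algebra.
From mathcomp Require Import ring lra.
Import Order.TTheory GRing.Theory Num.Theory.
Set Implicit Arguments. Unset Strict Implicit. Unset Printing Implicit Defensive.
Local Open Scope ring_scope.

(* Fix a group V of voters who all approve a project q that is not selected yet,
   and let s be the elapsed time.  The potential  Phi = sum_{i,j in V} min(b_i, b_j)
   of the balances grows at rate |V|^2 while time passes; a selection resets the
   balances of the k members of V approving the selected project, which lowers
   Phi by at most 2k sum_V b <= 2k cost(q), since the supporters of an unselected
   q never hold more than cost(q).  Those k voters each gain an approved selected
   project, so |V|^2 s <= 2 cost(q) K + Phi throughout, where K counts the pairs
   (i in V, selected project approved by i).  When the rule stops, more than B/n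
   time has elapsed and Phi <= |V| cost(q).  For a T-cohesive V and q in T \ W we
   have cost(T) <= |V| B/n, which gives K/|V| > (cost(T)/max_T cost - 1)/2; if
   T is contained in W, every member of V already has |T| selected projects. *)

Lemma sum_nat_of_bool_card (I : finType) (V : {set I}) (P : pred I) :
  (\sum_(i in V) P i)%N = #|[set i in V | P i]|.
Proof.
rewrite -sum1_card [RHS]big_mkcond [LHS]big_mkcond /=.
by apply: eq_bigr => i _; rewrite !inE; case: (i \in V); case: (P i).
Qed.

Lemma sub_ler_psum (R : realDomainType) (I : finType) (P Q : pred I) (F : I -> R) :
  (forall i, 0 <= F i) -> (forall i, P i -> Q i) ->
  \sum_(i | P i) F i <= \sum_(i | Q i) F i.
Proof.
move=> F_ge0 PQ; rewrite [leRHS](bigID P) /=.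
rewrite (eq_bigl P) => [|i]; last exact/andb_idl/PQ.
by rewrite lerDl sumr_ge0.
Qed.

Lemma affine_le_of_lt_before (R : realFieldType) (c m k t : R) :
  0 <= m -> c <= k -> (forall t', 0 <= t' -> t' < t -> c + t' * m < k) ->
  c + t * m <= k.
Proof.
move=> m_ge0 c_le lt_before; rewrite leNgt; apply/negP => over.
have m_gt0 : 0 < m.
  by rewrite lt_def m_ge0 andbT; apply: contraTneq over => ->; rewrite mulr0 addr0 -leNgt.
suff : c + (k - c) / m * m < k by rewrite divfK ?gt_eqF //; lra.
apply: lt_before; first by rewrite divr_ge0 // subr_ge0.
by rewrite ltr_pdivrMr //; lra.
Qed.

Section PairMinSum.
Variables (R : realFieldType) (I : finType).
Implicit Types (V : {set I}) (a : I -> R) (P : pred I).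

Definition pair_min_sum V a : R := \sum_(i in V) \sum_(j in V) Num.min (a i) (a j).

Lemma pair_min_sumD V a t :
  pair_min_sum V (fun i => a i + t) = pair_min_sum V a + #|V|%:R ^+ 2 * t.
Proof.
rewrite /pair_min_sum expr2 -mulrA [in RHS]mulr_natl -sumr_const -big_split /=.
apply: eq_bigr => i _; rewrite mulr_natl -sumr_const -big_split /=.
by apply: eq_bigr => j _; rewrite addr_minl.
Qed.

Lemma pair_min_sum_le V a : pair_min_sum V a <= #|V|%:R * \sum_(j in V) a j.
Proof.
rewrite mulr_natl -sumr_const; apply: ler_sum => i _.
by apply: ler_sum => j _; rewrite ge_min lexx orbT.
Qed.

Lemma pair_min_sum_reset V a P : (forall i, 0 <= a i) ->
  pair_min_sum V a <= pair_min_sum V (fun i => if P i then 0 else a i)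
                      + 2 * #|[set i in V | P i]|%:R * \sum_(j in V) a j.
Proof.
move=> a_ge0.
have min_reset (x y : R) (bx b_y : bool) : 0 <= x -> 0 <= y ->
    Num.min x y <= Num.min (if bx then 0 else x) (if b_y then 0 else y)
                   + bx%:R * y + b_y%:R * x.
  move=> x_ge0 y_ge0.
  have le_x : Num.min x y <= x by rewrite ge_min lexx.
  have le_y : Num.min x y <= y by rewrite ge_min lexx orbT.
  have min0y : Num.min 0 y = 0 by rewrite min_l.
  have minx0 : Num.min x 0 = 0 by rewrite min_r.
  have min00 : Num.min 0 0 = 0 :> R by rewrite minxx.
  by case: bx; case: b_y; rewrite /= ?mul1r ?mul0r ?addr0 ?min0y ?minx0 ?min00; lra.
have count_sum : \sum_(i in V) (P i)%:R = #|[set i in V | P i]|%:R :> R.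
  by rewrite -sum_nat_of_bool_card natr_sum.
apply: le_trans (ler_sum _ (fun i _ => ler_sum _ (fun j _ =>
  min_reset (a i) (a j) (P i) (P j) (a_ge0 i) (a_ge0 j)))) _.
rewrite /pair_min_sum -count_sum.
under eq_bigr => i _ do rewrite big_split /= big_split /= -mulr_sumr -mulr_suml.
rewrite !big_split /= -mulr_suml -mulr_sumr.
lra.
Qed.
End PairMinSum.

Section Phragmen.
Variables (R : realFieldType) (Voter Proj : finType).
Variables (B : R) (cost : Proj -> R) (A : Voter -> {set Proj}).
Hypothesis cost_gt0 : forall p, 0 < cost p.
Implicit Types (W T : {set Proj}) (V : {set Voter}) (b : Voter -> R) (t s : R).

Definition approvers (q : Proj) : {set Voter} := [set i | q \in A i].

Definition coverage (W : {set Proj}) (V : {set Voter}) : R :=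
  \sum_(i in V) #|W :&: A i|%:R.

Lemma coverage_ge0 W V : 0 <= coverage W V.
Proof. by rewrite sumr_ge0 // => i _; rewrite ler0n. Qed.

Lemma support_creditE b q : support_credit A b q = \sum_(i in approvers q) b i.
Proof. by apply: eq_bigl => i; rewrite inE. Qed.

Lemma support_creditD b t q :
  support_credit A (fun i => b i + t) q
  = support_credit A b q + t * #|approvers q|%:R.
Proof. by rewrite !support_creditE big_split /= sumr_const mulr_natr. Qed.

Lemma phrag_step_credit_le W b p t q :
  (forall q, q \notin W -> support_credit A b q <= cost q) ->
  phrag_step cost A W b p t -> q \notin W ->
  support_credit A (fun i => b i + t) q <= cost q.
Proof.
move=> credit_le [_ _ _ first_moment] qW; rewrite support_creditD.
apply: affine_le_of_lt_before => [|| t' t'_ge0 lt_t't].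
- exact: ler0n.
- exact: credit_le.
- by rewrite -support_creditD; apply: first_moment.
Qed.

Lemma phrag_step_group_credit_le W b p t V q :
  (forall i, 0 <= b i) ->
  (forall q, q \notin W -> support_credit A b q <= cost q) ->
  phrag_step cost A W b p t -> q \notin W -> V \subset approvers q ->
  \sum_(i in V) (b i + t) <= cost q.
Proof.
move=> b_ge0 credit_le step qW sVq; have [_ t_ge0 _ _] := step.
apply: le_trans (phrag_step_credit_le credit_le step qW).
apply: sub_ler_psum => [i | i iV]; first exact: addr_ge0.
by have := subsetP sVq i iV; rewrite inE.
Qed.

Lemma phrag_step_exists W b q i :
  (forall q, q \notin W -> support_credit A b q <= cost q) ->
  q \notin W -> q \in A i -> exists p t, phrag_step cost A W b p t.
Proof.
move=> credit_le qW qAi.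
pose waiting q := (cost q - support_credit A b q) / #|approvers q|%:R.
pose candidate := [pred q | (q \notin W) && (0 < #|approvers q|)%N].
have candidate_q : candidate q.
  by rewrite /= qW; apply/card_gt0P; exists i; rewrite inE.
have [p /andP [pW approvers_p] p_first] := arg_minP waiting candidate_q.
have m_gt0 : 0 < #|approvers p|%:R :> R by rewrite ltr0n.
exists p, (waiting p); split=> //.
- by rewrite divr_ge0 ?ler0n // subr_ge0 credit_le.
- by rewrite support_creditD divfK ?gt_eqF // subrKC.
move=> t' q' t'_ge0 lt_t' q'W; rewrite support_creditD.
have [no_approvers | approvers_q'] := posnP #|approvers q'|.
  rewrite support_creditE (cards0_eq no_approvers) big_set0 cards0.
  by rewrite mulr0 addr0.
have m'_gt0 : 0 < #|approvers q'|%:R :> R by rewrite ltr0n.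
have : t' < waiting q' by apply: lt_le_trans lt_t' (p_first _ _); rewrite /= q'W.
by rewrite ltr_pdivlMr // ltrBrDl addrC.
Qed.

Lemma card_setU1I W (X : {set Proj}) p : p \notin W ->
  #|(p |: W) :&: X| = ((p \in X) + #|W :&: X|)%N.
Proof.
move=> pW; rewrite setIUl; case: (boolP (p \in X)) => pX.
  by rewrite (setIidPl _) ?sub1set // cardsU1 inE (negbTE pW).
by rewrite disjoint_setI0 ?set0U // disjoints1.
Qed.

Lemma coverage_setU1 W V p : p \notin W ->
  coverage (p |: W) V = coverage W V + #|[set i in V | p \in A i]|%:R.
Proof.
move=> pW; rewrite -sum_nat_of_bool_card natr_sum -big_split /=.
by apply: eq_bigr => i _; rewrite card_setU1I // natrD addrC.
Qed.

Lemma sum_phrag_update W b p t : phrag_step cost A W b p t ->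
  \sum_i phrag_update A b p t i + cost p = \sum_i b i + #|Voter|%:R * t.
Proof.
move=> [_ _ funded _].
have -> : \sum_i b i + #|Voter|%:R * t = \sum_i (b i + t).
  by rewrite big_split /= sumr_const mulr_natl.
rewrite -funded addrC [in RHS](bigID (fun i => p \in A i)) /=; congr (_ + _).
rewrite (bigID (fun i => p \in A i)) /= big1 ?add0r => [|i pAi].
  by apply: eq_bigr => i /negbTE pAi; rewrite /phrag_update pAi.
by rewrite /phrag_update pAi.
Qed.

(* [s] is the time elapsed since the start of the rule. *)
Definition phrag_inv W b s : Prop :=
  [/\ forall i, 0 <= b i,
      forall q, q \notin W -> support_credit A b q <= cost q,
      \sum_i b i + costS cost W = #|Voter|%:R * s &
      forall V q, q \notin W -> V \subset approvers q ->
        #|V|%:R ^+ 2 * s <= 2 * cost q * coverage W V + pair_min_sum V b].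

Lemma phrag_inv0 : phrag_inv set0 (fun _ => 0) 0.
Proof.
split=> [i | q _ | | V q _ _].
- exact: lexx.
- by rewrite /support_credit big1 // ltW.
- by rewrite big1 // /costS big_set0 addr0 mulr0.
have pms_ge0 : 0 <= pair_min_sum V (fun _ => 0 : R).
  by rewrite sumr_ge0 // => i _; rewrite sumr_ge0 // => j _; rewrite minxx.
by rewrite mulr0 addr_ge0 // !mulr_ge0 ?coverage_ge0 // ltW.
Qed.

Lemma pair_min_sum_phrag_update V b p t c :
  (forall i, 0 <= b i) -> 0 <= t -> \sum_(i in V) (b i + t) <= c ->
  pair_min_sum V b + #|V|%:R ^+ 2 * t
  <= pair_min_sum V (phrag_update A b p t) + 2 * #|[set i in V | p \in A i]|%:R * c.
Proof.
move=> b_ge0 t_ge0 sum_le; rewrite -pair_min_sumD.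
have a_ge0 i : 0 <= b i + t by rewrite addr_ge0.
apply: le_trans (pair_min_sum_reset V (fun i => p \in A i) a_ge0) _.
by rewrite lerD2l ler_wpM2l // mulr_ge0 ?ler0n.
Qed.

Lemma phrag_inv_next W b s p t :
  phrag_inv W b s -> phrag_step cost A W b p t ->
  phrag_inv (p |: W) (phrag_update A b p t) (s + t).
Proof.
move=> [b_ge0 credit_le budget potential] step.
have [pW t_ge0 _ _] := step.
have notin_W q : q \notin p |: W -> q \notin W.
  by rewrite in_setU1 negb_or => /andP[].
split.
- by move=> i; rewrite /phrag_update; case: (p \in A i) => //; rewrite addr_ge0.
- move=> q /notin_W qW; apply: le_trans (phrag_step_credit_le credit_le step qW).
  by apply: ler_sum => i _; rewrite /phrag_update; case: (p \in A i); rewrite ?addr_ge0.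
- have := sum_phrag_update step; rewrite /costS big_setU1 //= -/(costS cost W); lra.
move=> V q /notin_W qW sVq.
have sum_le := phrag_step_group_credit_le b_ge0 credit_le step qW sVq.
have := potential V q qW sVq; have := pair_min_sum_phrag_update p b_ge0 t_ge0 sum_le.
rewrite coverage_setU1 //; lra.
Qed.

Lemma phrag_reach_inv W b : phrag_reach B cost A W b -> exists s, phrag_inv W b s.
Proof.
elim=> [|{}W {}b p t _ [s inv] step _]; first by exists 0; exact: phrag_inv0.
by exists (s + t); apply: phrag_inv_next.
Qed.

Lemma phragmen_outcome_coverage_bound W V q :
  phragmen_outcome B cost A W -> q \notin W -> V \subset approvers q -> V != set0 ->
  #|V|%:R ^+ 2 * (B / #|Voter|%:R)
  < 2 * cost q * coverage W V + #|V|%:R * cost q.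
Proof.
move=> [b [reach stop]] qW sVq /set0Pn [i iV].
have [s [b_ge0 credit_le budget potential]] := phrag_reach_inv reach.
have [[p [t [step over_budget]]] | no_step] := stop; last first.
  have qAi : q \in A i by have := subsetP sVq i iV; rewrite inE.
  by have [p [t step]] := phrag_step_exists credit_le qW qAi; case: (no_step p t).
have [pW t_ge0 funded _] := step.
have n_gt0 : 0 < #|Voter|%:R :> R by rewrite ltr0n; apply/card_gt0P; exists i.
have v_gt0 : 0 < #|V|%:R :> R by rewrite ltr0n; apply/card_gt0P; exists i.
have time_over : B / #|Voter|%:R < s + t.
  have : cost p <= \sum_i (b i + t).
    by rewrite -funded; apply: sub_ler_psum => // j; rewrite addr_ge0.
  move: over_budget; rewrite /costS big_setU1 //= -/(costS cost W).
  rewrite big_split /= sumr_const -mulr_natl ltr_pdivrMr //; lra.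
have sum_le := phrag_step_group_credit_le b_ge0 credit_le step qW sVq.
have := potential V q qW sVq; have := pair_min_sumD V b t.
have := pair_min_sum_le V (fun j => b j + t).
have : #|V|%:R * \sum_(j in V) (b j + t) <= #|V|%:R * cost q by rewrite ler_pM2l.
have : #|V|%:R ^+ 2 * (B / #|Voter|%:R) < #|V|%:R ^+ 2 * (s + t).
  by rewrite ltr_pM2l // exprn_gt0.
lra.
Qed.

Lemma cost_le_costS T q : q \in T -> cost q <= costS cost T.
Proof.
move=> qT; rewrite /costS (bigD1 q) //= lerDl sumr_ge0 // => p _.
exact: ltW.
Qed.

Lemma cohesive_costS_le T V :
  cohesive B cost A T V -> 0 < B -> costS cost T <= #|V|%:R * (B / #|Voter|%:R).
Proof.
move=> [_ costS_le] B_gt0; have := ler_wpM2r (ltW B_gt0) costS_le.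
by rewrite divfK ?gt_eqF // mulrAC -mulrA.
Qed.

Lemma avg_ge_card W T V :
  T \subset W -> (forall i, i \in V -> T \subset A i) -> V != set0 ->
  #|T|%:R <= avg R A W V.
Proof.
move=> TW sVA /set0Pn [i iV].
have v_gt0 : 0 < #|V|%:R :> R by rewrite ltr0n; apply/card_gt0P; exists i.
rewrite /avg ler_pdivlMl // mulr_natl -sumr_const; apply: ler_sum => j jV.
by rewrite ler_nat subset_leq_card // subsetI TW sVA.
Qed.

Lemma avg_gt_of_coverage_bound W V (C d : R) :
  0 < d -> V != set0 -> #|V|%:R * C < 2 * d * coverage W V + #|V|%:R * d ->
  2^-1 * (C / d - 1) < avg R A W V.
Proof.
move=> d_gt0 /set0Pn [i iV] bound.
have v_gt0 : 0 < #|V|%:R :> R by rewrite ltr0n; apply/card_gt0P; exists i.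
have -> : 2^-1 * (C / d - 1) = (#|V|%:R * C - #|V|%:R * d) / (2 * d * #|V|%:R).
  by field; rewrite !gt_eqF.
have -> : avg R A W V = 2 * d * coverage W V / (2 * d * #|V|%:R).
  by rewrite [LHS]mulrC -/(coverage W V); field; rewrite !gt_eqF.
by rewrite ltr_pM2r ?invr_gt0 ?mulr_gt0 //; lra.
Qed.

End Phragmen.

Theorem theorem4 (R : realFieldType) (Voter Proj : finType)
  (B : R) (cost : Proj -> R) (A : Voter -> {set Proj})
  (hB : 0 < B) (hcost : forall p, 0 < cost p)
  (W : {set Proj}) (hW : phragmen_outcome B cost A W)
  (T : {set Proj}) (hT : T != set0) :
  prop_degree_ge B cost A W T
    (2^-1 * (costS cost T / max_cost cost T - 1)).
Proof.
move=> g lt_g; exists (2^-1 * (costS cost T / max_cost cost T - 1)).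
split=> [// | V cohesive_V]; have [sVA _] := cohesive_V.
have [t tT] := set0Pn _ hT.
have costS_gt0 : 0 < costS cost T := lt_le_trans (hcost t) (cost_le_costS hcost tT).
have costS_le := cohesive_costS_le cohesive_V hB.
have V_neq0 : V != set0.
  by apply: contraTneq costS_le => ->; rewrite cards0 mul0r -ltNge.
have [TW | /subsetPn [q qT qW]] := boolP (T \subset W).
  by rewrite ge_min avg_ge_card.
have sVq : V \subset approvers A q.
  by apply/subsetP => i iV; rewrite inE (subsetP (sVA i iV)).
have bound := phragmen_outcome_coverage_bound hcost hW qW sVq V_neq0.
have cost_le_max : cost q <= max_cost cost T := le_bigmax_cond _ _ qT.
have max_gt0 : 0 < max_cost cost T := lt_le_trans (hcost q) cost_le_max.
rewrite ge_min; apply/orP; right; apply/ltW/avg_gt_of_coverage_bound => //.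
have := coverage_ge0 R A W V; have : 0 < #|V|%:R :> R by rewrite ltr0n card_gt0.
nra.
Qed.
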